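(* Define the sequence $(y_k)_{k\ge1}$ by $y_1=1$ and $y_{k+1}=y_k+y_k^{1/3}$ for $k\ge1$. For any fixed real number $\alpha>\frac23$, we have $\sum_{k=1}^\infty y_k^{-\alpha}\ll 1$, i.e. the series converges and is bounded by a constant depending only on $\alpha$. *)

From Stdlib Require Import Reals.
From Coquelicot Require Import Coquelicot.
Open Scope R_scope.

(* yseq n is y_{n+1} of the paper: y_1 = 1, y_{k+1} = y_k + y_k^{1/3}.
   All terms are >= 1 > 0, so Rpower is the genuine real power. *)
Fixpoint yseq (n : nat) : R :=
  match n with
  | O => 1
  | S m => yseq m + Rpower (yseq m) (1/3)
  end.

(* Put g = alpha - 2/3 > 0 and t = y_k^(-2/3) in (0, 1], so that y_(k+1) = y_k (1 + t).
   Then y_k^(-g) - y_(k+1)^(-g) = y_(k+1)^(-g) ((1 + t)^g - 1) >= y_(k+1)^(-g) g ln (1 + t)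
   >= y_(k+1)^(-g) g t / 2, while y_(k+1)^(-alpha) <= y_(k+1)^(-g) t.  Hence
   y_(k+1)^(-alpha) <= (2/g) (y_k^(-g) - y_(k+1)^(-g)): the partial sums telescope and
   stay below 1 + 2/g, and a series of nonnegative terms with bounded partial sums converges. *)

From Stdlib Require Import Reals Lra.
From Coquelicot Require Import Coquelicot.
Open Scope R_scope.

Lemma Rpower_pos (x y : R) : 0 < Rpower x y.
Proof. unfold Rpower; apply exp_pos. Qed.

Lemma one_plus_mul_ln_le_Rpower (x g : R) : 1 + g * ln x <= Rpower x g.
Proof. unfold Rpower; apply exp_ineq1_le. Qed.

Lemma Rle_Rpower_l_Ropp (a b c : R) :
  0 <= c -> 0 < a <= b -> Rpower b (- c) <= Rpower a (- c).
Proof.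
  intros Hc Hab.
  rewrite !Rpower_Ropp.
  apply Rinv_le_contravar; [apply Rpower_pos | apply Rle_Rpower_l; assumption].
Qed.

Lemma half_le_ln_1_plus (t : R) : 0 <= t <= 1 -> t / 2 <= ln (1 + t).
Proof.
  intros Ht.
  assert (Hinv : 1 - ln (1 + t) <= / (1 + t)).
  { rewrite <- (exp_ln (1 + t)) at 2 by lra.
    rewrite <- exp_Ropp.
    apply exp_ineq1_le. }
  assert (Hhalf : t / 2 <= 1 - / (1 + t)).
  { apply Rmult_le_reg_r with (2 * (1 + t)); [lra|].
    field_simplify; [nra | lra]. }
  lra.
Qed.

Lemma add_cube_root_factor (y : R) :
  0 < y -> y + Rpower y (1/3) = y * (1 + Rpower y (- (2/3))).
Proof.
  intros Hy.
  rewrite Rmult_plus_distr_l, Rmult_1_r.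
  replace (y * Rpower y (- (2/3))) with (Rpower y 1 * Rpower y (- (2/3)))
    by (rewrite Rpower_1; trivial).
  rewrite <- Rpower_plus.
  do 2 f_equal; lra.
Qed.

Lemma Rpower_step_telescoping_bound (g y : R) :
  0 < g -> 1 <= y ->
  Rpower (y + Rpower y (1/3)) (- (g + 2/3)) <=
  2 / g * (Rpower y (- g) - Rpower (y + Rpower y (1/3)) (- g)).
Proof.
  intros Hg Hy.
  set (t := Rpower y (- (2/3))).
  set (z := y + Rpower y (1/3)).
  assert (Ht : 0 < t <= 1).
  { split; [apply Rpower_pos|].
    rewrite <- (Rpower_O y) by lra.
    apply Rle_Rpower; lra. }
  assert (Hz : z = y * (1 + t)) by (apply add_cube_root_factor; lra).
  assert (Hyz : 0 < y <= z) by (rewrite Hz; nra).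
  assert (Hzg := Rpower_pos z (- g)).
  assert (Hlhs : Rpower z (- (g + 2/3)) <= Rpower z (- g) * t).
  { rewrite Ropp_plus_distr, Rpower_plus.
    apply Rmult_le_compat_l; [lra|].
    apply Rle_Rpower_l_Ropp; lra. }
  assert (Hgap : Rpower y (- g) = Rpower z (- g) * Rpower (1 + t) g).
  { rewrite Hz, <- Rpower_mult_distr by lra.
    rewrite Rmult_assoc, <- Rpower_plus.
    replace (- g + g) with 0 by ring.
    rewrite Rpower_O by lra.
    ring. }
  assert (Hgrowth : g * (t / 2) <= Rpower (1 + t) g - 1).
  { assert (Hln := half_le_ln_1_plus t).
    assert (H1 := one_plus_mul_ln_le_Rpower (1 + t) g).
    nra. }
  rewrite Hgap.
  apply Rle_trans with (1 := Hlhs).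
  apply Rle_trans with (2 / g * (Rpower z (- g) * (g * (t / 2)))).
  - right; field; lra.
  - apply Rmult_le_compat_l; [apply Rlt_le, Rdiv_lt_0_compat; lra|].
    nra.
Qed.

Lemma yseq_ge1 (n : nat) : 1 <= yseq n.
Proof.
  induction n as [|n IH]; simpl; [lra|].
  assert (H := Rpower_pos (yseq n) (1/3)).
  lra.
Qed.

Lemma ex_series_telescoping_bound (u v : nat -> R) :
  (forall n, 0 <= u n) -> (forall n, 0 <= v n) ->
  (forall n, u n <= v n - v (S n)) -> ex_series u.
Proof.
  intros Hu Hv Huv.
  assert (Hpartial : forall n, sum_f_R0 u n <= v O - v (S n)).
  { induction n as [|n IH]; simpl.
    - apply Huv.
    - specialize (Huv (S n)). lra. }
  destruct (growing_cv (sum_f_R0 u)) as [l Hl].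
  - intros n; simpl; specialize (Hu (S n)); lra.
  - exists (v O); intros x [n ->].
    specialize (Hpartial n); specialize (Hv (S n)); lra.
  - exists l; apply is_series_Reals; exact Hl.
Qed.

Theorem lemma3p1 (alpha : R) (Halpha : 2/3 < alpha) :
  ex_series (fun n : nat => Rpower (yseq n) (- alpha)).
Proof.
  set (g := alpha - 2/3).
  assert (Hg : 0 < g) by (unfold g; lra).
  apply ex_series_incr_1.
  apply ex_series_telescoping_bound with (v := fun n => 2 / g * Rpower (yseq n) (- g)).
  - intros n; apply Rlt_le, Rpower_pos.
  - intros n; apply Rlt_le, Rmult_lt_0_compat;
      [apply Rdiv_lt_0_compat; lra | apply Rpower_pos].
  - intros n.
    replace alpha with (g + 2/3) by (unfold g; ring).
    rewrite <- Rmult_minus_distr_l.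
    apply Rpower_step_telescoping_bound; [exact Hg | apply yseq_ge1].
Qed.
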